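(* Let $\mathcal{H}$ be a complex Hilbert space of finite dimension $n\ge2$, $m\ge 2$, let $\sigma$ be a self-adjoint operator on $\mathcal{H}$ with spectral decomposition $\sigma=\sum_j s_j\Pi_j$ (the $s_j$ pairwise distinct, $\Pi_j$ the orthogonal spectral projectors), and define $\Pi_{\rm sym}=\sum_j\Pi_j^{\otimes m}$. A density operator $\rho$ on $\mathcal{H}^{\otimes m}$ is in single $\sigma$-measurement consensus ($\sigma$SMC) if and only if $\mathrm{Tr}(\Pi_{\rm sym}\rho)=1$, which is equivalent to $\Pi_{\rm sym}\rho\Pi_{\rm sym}=\Pi_{\rm sym}\rho=\rho$.
   Context: For $X$ an operator on $\mathcal{H}$, $X^{(i)}=I^{\otimes(i-1)}\otimes X\otimes I^{\otimes(m-i)}$. $\rho$ is in $\sigma$SMC if $\mathrm{Tr}(\Pi_j^{(k)}\Pi_j^{(\ell)}\rho)=\mathrm{Tr}(\Pi_j^{(\ell)}\rho)$ for all $k,\ell\in\{1,\dots,m\}$ and all $j$. *)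

From HB Require Import structures.
From mathcomp Require Import all_boot all_order all_algebra.
Set Implicit Arguments. Unset Strict Implicit. Unset Printing Implicit Defensive.
Import Order.TTheory GRing.Theory Num.Theory.
Local Open Scope ring_scope.

Section Defs.
Variable C : numClosedFieldType.

Definition adjmx (p q : nat) (A : 'M[C]_(p, q)) : 'M[C]_(q, p) :=
  (map_mx Num.conj A)^T.

Definition herm_mx (p : nat) (A : 'M[C]_p) : Prop := adjmx A = A.

Definition orth_proj (p : nat) (A : 'M[C]_p) : Prop :=
  herm_mx A /\ A *m A = A.

Definition psd_mx (p : nat) (A : 'M[C]_p) : Prop :=
  herm_mx A /\ forall v : 'cV[C]_p, 0 <= (adjmx v *m A *m v) 0 0.

Definition density_mx (p : nat) (A : 'M[C]_p) : Prop := psd_mx A /\ \tr A = 1.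

(* Product basis of H^{⊗m}, H = C^n: basis vectors e_{a 0} ⊗ ... ⊗ e_{a (m-1)},
   indexed by a : {ffun 'I_m -> 'I_n}. *)
Definition tidx (n m : nat) := {ffun 'I_m -> 'I_n}.
Definition tdim (n m : nat) := #|{: tidx n m}|.

Definition tens (n m : nat) (X : 'I_m -> 'M[C]_n) : 'M[C]_(tdim n m) :=
  \matrix_(a, b) \prod_(l < m) X l ((enum_val a : tidx n m) l) ((enum_val b : tidx n m) l).

(* X^{(i)} = I^{⊗ i} ⊗ X ⊗ I^{⊗ (m-1-i)}  (0-based tensor slot i : 'I_m). *)
Definition slot (n m : nat) (X : 'M[C]_n) (i : 'I_m) : 'M[C]_(tdim n m) :=
  tens (fun l => if l == i then X else 1%:M).

Definition tpow (n m : nat) (X : 'M[C]_n) : 'M[C]_(tdim n m) :=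
  tens (fun _ : 'I_m => X).

Definition spectral_decomp (n K : nat) (sigma : 'M[C]_n)
    (s : 'I_K -> C) (P : 'I_K -> 'M[C]_n) : Prop :=
  [/\ (forall j, s j \is Num.real) /\ injective s,
      forall j, orth_proj (P j) /\ P j != 0,
      forall i j, i != j -> P i *m P j = 0,
      \sum_j P j = 1%:M &
      sigma = \sum_j s j *: P j].

Definition Pi_sym (n m K : nat) (P : 'I_K -> 'M[C]_n) : 'M[C]_(tdim n m) :=
  \sum_j tpow m (P j).

Definition sigmaSMC (n m K : nat) (P : 'I_K -> 'M[C]_n)
    (rho : 'M[C]_(tdim n m)) : Prop :=
  forall (k l : 'I_m) (j : 'I_K),
    \tr (slot (P j) k *m slot (P j) l *m rho) = \tr (slot (P j) l *m rho).

End Defs.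

(* The product projectors Pi_t = Pi_{t 0} (x) ... (x) Pi_{t (m-1)}, indexed by
   labels t : 'I_m -> 'I_K, are mutually orthogonal and resolve the identity of
   H^{(x)m}, so a density rho induces a probability distribution
   w t = Tr (Pi_t rho) on labels.  Both Pi_j^{(k)} = sum_{t k = j} Pi_t and
   Pi_sym = sum_{t constant} Pi_t are sums of product projectors, and the sigmaSMC
   identity for (k, l, j) says exactly that w vanishes on the labels with
   t l = j <> t k.  Hence sigmaSMC holds iff w is carried by the constant labels,
   i.e. iff Tr (Pi_sym rho) = 1.  For the second equivalence, Tr ((1 - E) rho) = 0
   for an orthogonal projector E and a positive rho forces (1 - E) rho = 0 and
   rho (1 - E) = 0. *)

From HB Require Import structures.
From mathcomp Require Import all_boot all_order all_algebra ring.
Import Order.TTheory GRing.Theory Num.Theory.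
Local Open Scope ring_scope.
Set Implicit Arguments. Unset Strict Implicit. Unset Printing Implicit Defensive.

Section Adjoint.
Variable C : numClosedFieldType.

Lemma adjmxE p q (A : 'M[C]_(p, q)) i j : adjmx A i j = (A j i)^*.
Proof. by rewrite !mxE. Qed.

Lemma adjmxK p q (A : 'M[C]_(p, q)) : adjmx (adjmx A) = A.
Proof. by apply/matrixP=> i j; rewrite !adjmxE conjCK. Qed.

Lemma adjmxM p q r (A : 'M[C]_(p, q)) (B : 'M[C]_(q, r)) :
  adjmx (A *m B) = adjmx B *m adjmx A.
Proof. by rewrite /adjmx map_mxM trmx_mul. Qed.

Lemma adjmxD p q (A B : 'M[C]_(p, q)) : adjmx (A + B) = adjmx A + adjmx B.
Proof. by apply/matrixP=> i j; rewrite !mxE rmorphD. Qed.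

Lemma adjmxN p q (A : 'M[C]_(p, q)) : adjmx (- A) = - adjmx A.
Proof. by apply/matrixP=> i j; rewrite !mxE rmorphN. Qed.

Lemma adjmxZ p q (c : C) (A : 'M[C]_(p, q)) : adjmx (c *: A) = c^* *: adjmx A.
Proof. by apply/matrixP=> i j; rewrite !mxE rmorphM. Qed.

Lemma adjmx_sum p q (I : finType) (P : pred I) (F : I -> 'M[C]_(p, q)) :
  adjmx (\sum_(i | P i) F i) = \sum_(i | P i) adjmx (F i).
Proof.
apply/matrixP=> i j; rewrite adjmxE !summxE rmorph_sum.
by apply: eq_bigr => k _; rewrite adjmxE.
Qed.

Lemma adjmx1 p : adjmx (1%:M : 'M[C]_p) = 1%:M.
Proof. by apply/matrixP=> i j; rewrite adjmxE !mxE eq_sym; case: eqP; rewrite ?conjC0 ?conjC1. Qed.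

End Adjoint.

Section PositiveSemidefinite.
Variables (C : numClosedFieldType) (p : nat).
Implicit Types (M E rho : 'M[C]_p) (x y : 'cV[C]_p).

Lemma mulmx_row_col q r (A : 'M[C]_(q, p)) (B : 'M[C]_(p, r)) i j :
  (A *m B) i j = (row i A *m col j B) 0 0.
Proof. by rewrite !mxE; apply: eq_bigr => k _; rewrite !mxE. Qed.

Definition hform M x y := (adjmx x *m M *m y) 0 0.

Lemma hformDl M x1 x2 y : hform M (x1 + x2) y = hform M x1 y + hform M x2 y.
Proof. by rewrite /hform adjmxD !mulmxDl mxE. Qed.

Lemma hformDr M x y1 y2 : hform M x (y1 + y2) = hform M x y1 + hform M x y2.
Proof. by rewrite /hform !mulmxDr mxE. Qed.

Lemma hformZl M c x y : hform M (c *: x) y = c^* * hform M x y.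
Proof. by rewrite /hform adjmxZ -!scalemxAl mxE. Qed.

Lemma hformZr M c x y : hform M x (c *: y) = c * hform M x y.
Proof. by rewrite /hform -!scalemxAr mxE. Qed.

Lemma hform_conj M x y : herm_mx M -> hform M y x = (hform M x y)^*.
Proof.
by move=> hM; rewrite /hform -adjmxE !adjmxM adjmxK hM mulmxA.
Qed.

Lemma hform_deltal M k y : hform M (delta_mx k 0) y = (M *m y) k 0.
Proof.
rewrite /hform; have -> : adjmx (delta_mx k 0 : 'cV[C]_p) = delta_mx 0 k.
  by apply/matrixP=> i j; rewrite !mxE conjC_nat andbC.
by rewrite -mulmxA -rowE mxE.
Qed.

(* With [c = (M a)_k] and [b = e_k^* M e_k], the form at [(b + 1) a - c e_k]
   equals [- |c|^2 (b + 2)], which is nonnegative only if [c = 0]. *)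
Lemma psd_hform_eq0 M a : psd_mx M -> hform M a a = 0 -> M *m a = 0.
Proof.
move=> [hM M_ge0] Maa0; apply/matrixP=> k z; rewrite (ord1 z) [RHS]mxE.
set e : 'cV[C]_p := delta_mx k 0; set c := (M *m a) k 0.
have Mea : hform M e a = c by rewrite hform_deltal.
have Mae : hform M a e = c^* by rewrite hform_conj // Mea.
set b := hform M e e; have b_ge0 : 0 <= b := M_ge0 e.
have lR : (b + 1)^* = b + 1 by apply/conj_Creal; rewrite rpredD ?ger0_real.
have := M_ge0 ((b + 1) *: a + (- c) *: e).
rewrite -/(hform M _ _) hformDl !hformDr !hformZl !hformZr Maa0 Mea Mae -/b.
rewrite lR rmorphN /=.
have -> : (b + 1) * ((b + 1) * 0) + (b + 1) * (- c * c^*)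
          + ((- c^*) * ((b + 1) * c) + - c^* * (- c * b)) = - (c * c^* * (b + 2)).
  by ring.
rewrite oppr_ge0 pmulr_lle0 ?ltr_wpDl // => cc_le0.
have : c * c^* == 0 by rewrite eq_le cc_le0 mul_conjC_ge0.
by rewrite mul_conjC_eq0 => /eqP.
Qed.

Lemma mxtrace_proj_mul E rho : orth_proj E ->
  \tr (E *m rho) = \sum_i hform rho (col i E) (col i E).
Proof.
move=> [hE idE]; rewrite -{1}idE -mulmxA mxtrace_mulC.
apply: eq_bigr => i _; rewrite mulmx_row_col row_mul /hform -{1}hE.
by congr ((_ *m _ *m _) 0 0); apply/matrixP=> x y; rewrite !mxE.
Qed.

Lemma mxtrace_proj_ge0 E rho : orth_proj E -> psd_mx rho -> 0 <= \tr (E *m rho).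
Proof.
by move=> hE [_ rho_ge0]; rewrite mxtrace_proj_mul //; apply: sumr_ge0 => i _; apply: rho_ge0.
Qed.

Lemma mxtrace_proj_eq0 E rho : orth_proj E -> psd_mx rho ->
  \tr (E *m rho) = 0 -> rho *m E = 0 /\ E *m rho = 0.
Proof.
move=> hE hrho; rewrite mxtrace_proj_mul // => tr0.
have rhoE0 : rho *m E = 0.
  apply/matrixP=> k i.
  have /(psd_hform_eq0 hrho) := psumr_eq0P (fun i _ => hrho.2 (col i E)) tr0 (i:=i) isT.
  by move/(congr1 (fun v : 'cV_p => v k 0)); rewrite colE mulmxA -colE !mxE.
split=> //; rewrite -[E]hE.1 -[rho]hrho.1 -adjmxM rhoE0.
by apply/matrixP=> x y; rewrite !mxE conjC0.
Qed.

Lemma orth_projC E : orth_proj E -> orth_proj (1%:M - E).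
Proof.
move=> [hE idE]; split; first by rewrite /herm_mx adjmxD adjmxN adjmx1 hE.
by rewrite mulmxBl !mulmxBr !mul1mx mulmx1 idE subrr subr0.
Qed.

Lemma density_mxtrace_proj_eq1 E rho : orth_proj E -> density_mx rho ->
  \tr (E *m rho) = 1 <-> E *m rho *m E = rho /\ E *m rho = rho.
Proof.
move=> hE [hrho tr1]; split=> [trE1|[_ Erho]]; last by rewrite Erho.
have : \tr ((1%:M - E) *m rho) = 0 by rewrite mulmxBl mul1mx linearB /= tr1 trE1 subrr.
case/(mxtrace_proj_eq0 (orth_projC hE) hrho).
rewrite mulmxBr mulmxBl mulmx1 mul1mx => /eqP + /eqP.
by rewrite !subr_eq0 => /eqP rhoE /eqP Erho; rewrite -mulmxA -rhoE -Erho.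
Qed.

End PositiveSemidefinite.

Lemma psumr_eq1P (R : numDomainType) (I : finType) (A : pred I) (w : I -> R) :
    (forall i, 0 <= w i) -> \sum_i w i = 1 ->
  \sum_(i | A i) w i = 1 <-> (forall i, ~~ A i -> w i = 0).
Proof.
move=> w_ge0; rewrite (bigID A) /= => w1; split=> [wA1 i nAi | wNA0].
  move: w1; rewrite wA1 -[RHS]addr0 => /addrI wNA0.
  exact: (psumr_eq0P (fun i _ => w_ge0 i) wNA0).
by rewrite -w1 [X in _ = _ + X]big1 ?addr0.
Qed.

Section ProjectorFamily.
Variables (C : numClosedFieldType) (p : nat) (I : finType) (E : I -> 'M[C]_p).
Hypothesis E_herm : forall i, herm_mx (E i).
Hypothesis E_mul : forall i j, E i *m E j = if i == j then E i else 0.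

Definition proj_sum (A : pred I) := \sum_(i | A i) E i.

Lemma proj_sumM A B : proj_sum A *m proj_sum B = proj_sum (predI A B).
Proof.
rewrite /proj_sum mulmx_suml big_mkcondr /=; apply: eq_bigr => i _.
rewrite mulmx_sumr; under eq_bigr do rewrite E_mul.
case: ifP => [Bi|/negbT nBi].
  by rewrite (bigD1 i) //= eqxx big1 ?addr0 // => j /andP[_ /negbTE]; rewrite eq_sym => ->.
by apply: big1 => j Bj; case: eqP => // ij; rewrite ij Bj in nBi.
Qed.

Lemma proj_sum_orth_proj A : orth_proj (proj_sum A).
Proof.
split; last by rewrite proj_sumM; apply: eq_bigl => i; rewrite /= andbb.
by rewrite /herm_mx adjmx_sum; apply: eq_bigr => i _; apply: E_herm.
Qed.

Lemma mxtrace_proj_sum A rho :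
  \tr (proj_sum A *m rho) = \sum_(i | A i) \tr (E i *m rho).
Proof. by rewrite mulmx_suml raddf_sum. Qed.

End ProjectorFamily.

Section Tensor.
Variables (C : numClosedFieldType) (n m : nat).
Implicit Types X Y : 'I_m -> 'M[C]_n.
Local Notation ev a := (enum_val a : tidx n m).

Lemma tensE X a b : tens X a b = \prod_(l < m) X l (ev a l) (ev b l).
Proof. by rewrite mxE. Qed.

Lemma eq_tens X Y : X =1 Y -> tens X = tens Y.
Proof. by move=> XY; apply/matrixP=> a b; rewrite !tensE; apply: eq_bigr => l _; rewrite XY. Qed.

Lemma tensM X Y : tens X *m tens Y = tens (fun l => X l *m Y l).
Proof.
apply/matrixP=> a c; rewrite !mxE.
under eq_bigr do rewrite !tensE -big_split /=.
rewrite -(big_enum_val (A := {: tidx n m})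
  (fun f => \prod_l (X l (ev a l) (f l) * Y l (f l) (ev c l)))).
rewrite -(bigA_distr_bigA (fun l j => X l (ev a l) j * Y l j (ev c l))) /=.
by apply: eq_bigr => l _; rewrite mxE.
Qed.

Lemma tens1 : tens (fun _ => 1%:M) = 1%:M :> 'M[C]_(tdim n m).
Proof.
apply/matrixP=> a b; rewrite tensE [RHS]mxE.
have [->|ab] := eqVneq a b; first by rewrite big1 // => l _; rewrite mxE eqxx.
have [l abl] : exists l, ev a l != ev b l.
  apply/existsP; move: ab; apply: contraNT; rewrite negb_exists => /forallP ab.
  by apply/eqP/enum_val_inj/ffunP => l; apply/eqP/negPn/ab.
by rewrite (bigD1 l) //= mxE (negbTE abl) mul0r.
Qed.

Lemma tens_eq0 X l : X l = 0 -> tens X = 0.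
Proof. by move=> Xl0; apply/matrixP=> a b; rewrite tensE (bigD1 l) //= Xl0 !mxE mul0r. Qed.

Lemma tens_sum K (F : 'I_m -> 'I_K -> 'M[C]_n) :
  tens (fun l => \sum_j F l j) = \sum_(t : {ffun 'I_m -> 'I_K}) tens (fun l => F l (t l)).
Proof.
apply/matrixP=> a b; rewrite tensE summxE.
under eq_bigr do rewrite summxE.
rewrite (bigA_distr_bigA (fun l j => F l j (ev a l) (ev b l))) /=.
by apply: eq_bigr => t _; rewrite tensE.
Qed.

Lemma adjmx_tens X : adjmx (tens X) = tens (fun l => adjmx (X l)).
Proof.
apply/matrixP=> a b; rewrite adjmxE !tensE rmorph_prod.
by apply: eq_bigr => l _; rewrite adjmxE.
Qed.

End Tensor.

Section SpectralProducts.
Variables (C : numClosedFieldType) (n m K : nat) (P : 'I_K -> 'M[C]_n).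
Hypothesis P_proj : forall j, orth_proj (P j).
Hypothesis P_orth : forall i j, i != j -> P i *m P j = 0.
Hypothesis P_sum : \sum_j P j = 1%:M.

Local Notation label := {ffun 'I_m -> 'I_K}.

Definition tens_proj (t : label) := tens (fun l => P (t l)).

Lemma tens_projM t u : tens_proj t *m tens_proj u = if t == u then tens_proj t else 0.
Proof.
rewrite tensM; have [<-|tu] := eqVneq t u.
  by apply: eq_tens => l; rewrite (P_proj _).2.
have [l tul] : exists l, t l != u l.
  apply/existsP; move: tu; apply: contraNT; rewrite negb_exists => /forallP tu.
  by apply/eqP/ffunP => l; apply/eqP/negPn/tu.
exact: tens_eq0 (P_orth tul).
Qed.

Lemma tens_proj_herm t : herm_mx (tens_proj t).
Proof. by rewrite /herm_mx adjmx_tens; apply: eq_tens => l; apply: (P_proj _).1. Qed.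

Lemma sum_tens_proj : \sum_t tens_proj t = 1%:M.
Proof. by rewrite -tens1 /tens_proj -(tens_sum (fun _ => P)); apply: eq_tens. Qed.

Lemma slot_proj_sum j k : slot (P j) k = proj_sum tens_proj (fun t => t k == j).
Proof.
pose F l i := if (l == k) && (i != j) then 0 else P i.
rewrite /slot (@eq_tens _ _ _ _ (fun l => \sum_i F l i)); last first.
  move=> l; rewrite /F; case: eqP => _ /=; last by rewrite -P_sum.
  rewrite (bigD1 j) //= eqxx big1 ?addr0 // => i ij; by rewrite ij.
rewrite tens_sum /proj_sum [RHS]big_mkcond /=; apply: eq_bigr => t _.
have [tkj|tkj] := eqVneq (t k) j.
  by apply: eq_tens => l; rewrite /F; case: eqP => // ->; rewrite tkj eqxx.
by apply: (tens_eq0 (l := k)); rewrite /F eqxx tkj.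
Qed.

Hypothesis m_gt0 : (0 < m)%N.

Definition const_labels : {set label} := [set [ffun=> j] | j : 'I_K].

Lemma Pi_sym_proj_sum : Pi_sym m P = proj_sum tens_proj [in const_labels].
Proof.
have const_inj : injective (fun j : 'I_K => [ffun=> j] : label).
  by move=> i j /ffunP/(_ (Ordinal m_gt0)); rewrite !ffunE.
rewrite /proj_sum big_imset /=; last by move=> i j _ _; apply: const_inj.
by apply: eq_bigr => j _; apply: eq_tens => l; rewrite ffunE.
Qed.

Lemma nonconst_label t : t \notin const_labels -> exists k l, t k != t l.
Proof.
move=> tNconst; exists (Ordinal m_gt0).
apply/existsP; move: tNconst; apply: contraR; rewrite negb_exists => /forallP tconst.
apply/imsetP; exists (t (Ordinal m_gt0)) => //; apply/ffunP => l.
by rewrite ffunE; apply/esym/eqP/negPn; apply: tconst.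
Qed.

Variable rho : 'M[C]_(tdim n m).
Hypothesis rho_density : density_mx rho.

Definition label_weight t := \tr (tens_proj t *m rho).

Lemma tens_proj_orth_proj t : orth_proj (tens_proj t).
Proof. by split; [apply: tens_proj_herm | rewrite tens_projM eqxx]. Qed.

Lemma label_weight_ge0 t : 0 <= label_weight t.
Proof. exact: mxtrace_proj_ge0 (tens_proj_orth_proj t) rho_density.1. Qed.

Lemma sum_label_weight : \sum_t label_weight t = 1.
Proof. by case: rho_density => _ <-; rewrite -raddf_sum -mulmx_suml sum_tens_proj mul1mx. Qed.

Lemma mxtrace_slotM_eq j k l :
  \tr (slot (P j) k *m slot (P j) l *m rho) = \tr (slot (P j) l *m rho) <->
  \sum_(t : label | (t l == j) && (t k != j)) label_weight t = 0.
Proof.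
rewrite !slot_proj_sum (proj_sumM tens_projM) !mxtrace_proj_sum.
rewrite [in X in _ = X <-> _](bigID (fun t : label => t k == j)) /=.
rewrite (eq_bigl (fun t : label => (t l == j) && (t k == j))) => [|t]; last exact: andbC.
by split=> [/eqP|->]; [rewrite addrC -subr_eq subrr eq_sym => /eqP | rewrite addr0].
Qed.

Lemma sigmaSMC_label_weightP :
  sigmaSMC P rho <-> forall t, t \notin const_labels -> label_weight t = 0.
Proof.
split=> [smc t /nonconst_label[k [l tkl]] | w0 k l j].
  have /mxtrace_slotM_eq/psumr_eq0P := smc k l (t l).
  by apply; [move=> u _; apply: label_weight_ge0 | rewrite eqxx tkl].
apply/mxtrace_slotM_eq/big1 => t /andP[/eqP tl tkj]; apply: w0.
by apply/imsetP => -[i _ ti]; move: tkj; rewrite -tl ti !ffunE eqxx.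
Qed.

Lemma mxtrace_Pi_sym : \tr (Pi_sym m P *m rho) = \sum_(t in const_labels) label_weight t.
Proof. by rewrite Pi_sym_proj_sum mxtrace_proj_sum. Qed.

End SpectralProducts.

Theorem proposition4 (C : numClosedFieldType) (n m K : nat)
  (sigma : 'M[C]_n) (s : 'I_K -> C) (P : 'I_K -> 'M[C]_n)
  (rho : 'M[C]_(tdim n m)) :
  (2 <= n)%N -> (2 <= m)%N ->
  herm_mx sigma ->
  spectral_decomp sigma s P ->
  density_mx rho ->
  (sigmaSMC P rho <-> \tr (Pi_sym m P *m rho) = 1) /\
  (\tr (Pi_sym m P *m rho) = 1 <->
     (Pi_sym m P *m rho *m Pi_sym m P = rho /\ Pi_sym m P *m rho = rho)).
Proof.
move=> _ m_ge2 _ [_ P_proj P_orth P_sum _] rho_density.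
have {}P_proj j : orth_proj (P j) := (P_proj j).1.
have m_gt0 : (0 < m)%N by apply: leq_trans m_ge2.
split.
  rewrite (sigmaSMC_label_weightP P_proj P_orth P_sum m_gt0 rho_density).
  rewrite (mxtrace_Pi_sym P m_gt0) psumr_eq1P //.
    exact: label_weight_ge0.
  exact: sum_label_weight.
apply: density_mxtrace_proj_eq1 rho_density.
rewrite (Pi_sym_proj_sum P m_gt0).
exact: proj_sum_orth_proj (tens_proj_herm P_proj) (tens_projM P_proj P_orth) _.
Qed.
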